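(* Let $\{\mathbf Z_i(n), i\in\mathbb N\}$ be a critical GWBP/$\infty$ with mean matrix $\mathbf M\in\mathcal M_1^0$ and $\mathbf F(\mathbf s)\neq\mathbf M\mathbf s$. For each $i$ define $\epsilon_{1,i}(\mathbf Q(n;\mathbf s))$ by $$\sum_{j\in\mathbb N}Q_j(n;\mathbf s)\,N_{ij}\big(\mathbf F(n;\mathbf s)\big)=M_i\,\epsilon_{1,i}(\mathbf Q(n;\mathbf s)).$$ Then $$\lim_{n\to\infty}\sup_{\mathbf s\in\mathbf S,\ i\in\mathbb N}\frac{|\epsilon_{1,i}(\mathbf Q(n;\mathbf s))|}{\mathcal Q(n;\mathbf s)}=0.$$
   Context: A GWBP/$\infty$ has types $\mathbb N=\{1,2,\dots\}$. Each particle lives one unit of time; a type-$i$ particle produces, independently of everything else, a random vector $\mathbf Z_i=(Z_{ij})_{j\in\mathbb N}$ of children, with $Z_i:=\sum_jZ_{ij}<\infty$ a.s. $\mathbf Z_i(n)=(Z_{ij}(n))_j$ is the generation-$n$ population from one type-$i$ particle. For $\mathbf s\in[0,1]^{\mathbb N}$: $F_i(n;\mathbf s)=\mathbb E\prod_js_j^{Z_{ij}(n)}$, $F_i(\mathbf s)=F_i(1;\mathbf s)$, $\mathbf F(n;\mathbf s)=(F_i(n;\mathbf s))_i$, $Q_i(n;\mathbf s)=1-F_i(n;\mathbf s)$, $\mathbf Q(n;\mathbf s)=(Q_i(n;\mathbf s))_i$, $\mathcal Q(n;\mathbf s)=\sup_iQ_i(n;\mathbf s)$, $N_{ij}(\mathbf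 s)=\mathbb E\big[\sum_{k=0}^{Z_{ij}-1}s_j^k\big(1-\prod_{l=j+1}^\infty s_l^{Z_{il}}\big)\big]$. $\mathbf S=\{\mathbf s\in[0,1]^{\mathbb N}:\mathbf s\neq\mathbf 1\}$. ''$\mathbf F(\mathbf s)\neq\mathbf M\mathbf s$'' means it is not true that $F_i(\mathbf s)=\sum_jM_{ij}s_j$ for all $i,\mathbf s$. Mean matrix $\mathbf M=(M_{ij})$, $M_{ij}=\mathbb EZ_{ij}$, $M^{(n)}_{ij}=\mathbb EZ_{ij}(n)$, $M_i=\sum_jM_{ij}=\mathbb EZ_i$. Irreducible: for all $i,j$ some $M^{(n)}_{ij}>0$; aperiodic: gcd of such $n$ is 1; then $\lim_n(M^{(n)}_{ij})^{1/n}=1/R$ for a common $R$; critical: $R=1$. $\mathbf M\in\mathcal M_1$ means: (i) irreducible, aperiodic, $R=1$, 1-recurrent ($\sum_nM^{(n)}_{ij}=\infty$) and 1-positive ($\lim_nM^{(n)}_{ij}>0$ for all $i,j$); then there are positive eigenvectors $\mathbf v\mathbf M=\mathbf v$, $\mathbf M\mathbf u^T=\mathbf u^T$, unique up to positive multiples, normalized with $\sum_jv_ju_j=1$; (ii) $\sum_jv_j=1$ and $U:=\sup_iu_i<\infty$; (iii) $\lim_{N\to\infty}\sup_iM_i^{-1}\sum_{j>N}M_{ij}=0$ and $\lim_{K\to\infty}\sup_iM_i^{-1}\mathbb E[Z_i;Z_i>K]=0$. $\mathbf M\in\mathcal M_1^0$: $\mathbf M\in\mathcal M_1$ and (iv)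 there exist $m\in\mathbb N$, $c,C>0$ with $M_{ij}<Cu_iv_j$ and $M^{(m)}_{1j}>cv_j$ for all $i,j$. *)

From mathcomp Require Import all_boot all_order all_algebra.
From mathcomp Require Import all_classical all_reals all_analysis.
Set Implicit Arguments. Unset Strict Implicit. Unset Printing Implicit Defensive.
Import Order.TTheory GRing.Theory Num.Theory.
Import numFieldNormedType.Exports.
Local Open Scope ring_scope.
Local Open Scope classical_set_scope.

(* Types are indexed by nat = {0,1,2,...} (type k of the paper is k-1 here).
   An offspring vector Z_i = (Z_ij)_j is encoded by a list z : seq nat with
   Z_ij = nth 0 z j (so Z_i = sumn z < oo automatically).
   The offspring law of type i is a probability mass function p i on seq nat. *)

Section GW.
Variable R : realType.
Variable p : nat -> seq nat -> R.

Definition is_offspring_law : Prop :=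
  (forall i z, 0 <= p i z) /\
  (forall i, (\esum_(z in [set: seq nat]) (p i z)%:E = 1)%E).

(* E[ g(Z_i) ] for nonnegative g, in the extended reals *)
Definition Ex (i : nat) (g : seq nat -> R) : \bar R :=
  \esum_(z in [set: seq nat]) (p i z * g z)%:E.

Definition F1 (s : nat -> R) (i : nat) : R :=
  fine (Ex i (fun z => \prod_(j < size z) s j ^+ nth 0 z j)).

Definition Fn (n : nat) (s : nat -> R) : nat -> R := iter n F1 s.

Definition Qn (n : nat) (s : nat -> R) (i : nat) : R := 1 - Fn n s i.

Definition Qsup (n : nat) (s : nat -> R) : R := sup [set Qn n s i | i in [set: nat]].

Definition Mbar (i j : nat) : \bar R := Ex i (fun z => (nth 0 z j)%:R).
Definition Mi (i : nat) : \bar R := Ex i (fun z => (sumn z)%:R).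

Fixpoint Mpow (n : nat) (i j : nat) : \bar R :=
  match n with
  | 0 => (if i == j then 1 else 0)%:E
  | m.+1 => (\esum_(k in [set: nat]) (Mpow m i k * Mbar k j))%E
  end.

Definition Nbar (i j : nat) (s : nat -> R) : \bar R :=
  Ex i (fun z => (\sum_(k < nth 0 z j) s j ^+ k) *
                 (1 - \prod_(l < size z | (j < l)%N) s l ^+ nth 0 z l)).

Definition eps1 (n : nat) (s : nat -> R) (i : nat) : R :=
  fine (\esum_(j in [set: nat]) ((Qn n s j)%:E * Nbar i j (Fn n s))%E) / fine (Mi i).

Definition unit_cube (s : nat -> R) : Prop := forall j, 0 <= s j <= 1.

Definition Sset : set (nat -> R) := [set s | unit_cube s /\ s <> (fun _ => 1)].

Definition in_M1 (v u : nat -> R) : Prop :=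
  (forall i j, exists n, (0 < Mpow n.+1 i j)%E) /\
  (forall i d, (forall n, (0 < n)%N -> (0 < Mpow n i i)%E -> (d %| n)%N) -> d = 1%N) /\
  (forall i j, (fun n => fine (Mpow n i j) `^ (n%:R)^-1) @ \oo --> (1 : R)) /\
  (forall i j, (\esum_(n in [set: nat]) Mpow n i j)%E = +oo%E) /\
  (forall i j, exists l : R, 0 < l /\ (fun n => fine (Mpow n i j)) @ \oo --> l) /\
  (forall j, 0 < v j) /\ (forall i, 0 < u i) /\
  (forall j, (\esum_(i in [set: nat]) ((v i)%:E * Mbar i j))%E = (v j)%:E) /\
  (forall i, (\esum_(j in [set: nat]) (Mbar i j * (u j)%:E))%E = (u i)%:E) /\
  (\esum_(j in [set: nat]) (v j * u j)%:E)%E = 1%E /\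
  (\esum_(j in [set: nat]) (v j)%:E)%E = 1%E /\
  (exists U : R, forall i, u i <= U) /\
  (forall e : R, 0 < e -> \forall N \near \oo, forall i,
      (\esum_(j in [set j | (N < j)%N]) Mbar i j <= e%:E * Mi i)%E) /\
  (forall e : R, 0 < e -> \forall K \near \oo, forall i,
      (Ex i (fun z => ((sumn z)%:R * (K < sumn z)%N%:R)%R) <= e%:E * Mi i)%E).

Definition in_M10 (v u : nat -> R) : Prop :=
  in_M1 v u /\
  exists (m : nat) (c C : R), 0 < c /\ 0 < C /\
    (forall i j, (Mbar i j < (C * u i * v j)%:E)%E) /\
    (forall j, ((c * v j)%:E < Mpow m 0 j)%E).

Definition F_not_linear : Prop :=
  ~ (forall i s, unit_cube s ->
       F1 s i = fine (\esum_(j in [set: nat]) (Mbar i j * (s j)%:E))%E).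

End GW.

(* The bound on [eps_1] is a size-biased estimate.  With [Q = Q(n;s)] and
   [x = F(n;s)], each summand of [N_ij(x)] is at most [Z_ij min(1, Q Z_i)];
   splitting [Z_i] at a level [K] where [E[Z_i; Z_i > K] <= e M_i] for all [i]
   gives [0 <= eps_1,i <= Q (e + K Q)].  It remains to see that
   [Q(n;s) <= Q(n;0) -> 0] uniformly in [s].  The limits [q = lim F(n;0)] are a
   fixed point of [F], and as [M_ij <= C U v_j] with [v] a probability vector,
   dominated convergence makes [F(n;0) -> q] uniform.  Finally [q = 1]:
   otherwise irreducibility gives [q < 1] everywhere, and [v M = v] turns
   [1 - q <= M (1 - q)] into an equality.  Then [1 - q^Z <= Z . (1 - q)] is an
   almost sure equality, which forces [Z_i <= 1]; again [v M = v] gives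
   [M_i = 1], so [Z_i = 1] almost surely and [F(s) = M s]. *)

From mathcomp Require Import all_boot all_order all_algebra.
From mathcomp Require Import all_classical all_reals all_analysis.
From mathcomp Require Import ring lra.
Import Order.TTheory GRing.Theory Num.Theory.
Import numFieldNormedType.Exports.
Local Open Scope ring_scope.
Local Open Scope classical_set_scope.
Set Implicit Arguments. Unset Strict Implicit. Unset Printing Implicit Defensive.

Section ExtendedSums.
Variable R : realType.
Local Open Scope ereal_scope.

Lemma esumZl (T : choiceType) (I : set T) (a : T -> \bar R) (r : R) :
  (0 <= r)%R -> (forall i, I i -> 0 <= a i) ->
  \esum_(i in I) (r%:E * a i) = r%:E * \esum_(i in I) a i.
Proof.
move=> r0 a0; rewrite /esum -ereal_supZl //; last first.
  by apply/set0P; exists 0; exists set0; [exact: fsets_set0|rewrite fsbig_set0].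
have sumZ A : fsets I A -> \sum_(i \in A) r%:E * a i = r%:E * \sum_(i \in A) a i.
  move=> [finA AI]; rewrite !fsbig_finite // big_seq [in RHS]big_seq.
  by rewrite ge0_sume_distrr // => i; rewrite in_fset_set // inE => /AI /a0.
congr ereal_sup; apply/seteqP; split => x /=.
- by move=> [A AI <-]; exists (\sum_(i \in A) a i); [exists A|rewrite sumZ].
- by move=> [y [A AI <-] <-]; exists A => //; rewrite sumZ.
Qed.

Lemma exchange_esum (T1 T2 : choiceType) (a : T1 -> T2 -> \bar R) :
  (forall i j, 0 <= a i j) ->
  \esum_(i in [set: T1]) \esum_(j in [set: T2]) a i j =
  \esum_(j in [set: T2]) \esum_(i in [set: T1]) a i j.
Proof.
move=> a0; rewrite !esum_esum //.
rewrite (@reindex_esum R _ _ ([set: T2] `*`` (fun _ => [set: T1]))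
  ([set: T1] `*`` (fun _ => [set: T2])) (fun x : T2 * T1 => (x.2, x.1))) //.
split=> [[x y] //|[x y] [x' y'] _ _ [-> ->] //|[x y] _]; by exists (y, x).
Qed.

Lemma esum_nat_ord (f : nat -> \bar R) (n : nat) :
  (forall j, 0 <= f j) -> (forall j, (n <= j)%N -> f j = 0) ->
  \esum_(j in [set: nat]) f j = \sum_(j < n) f j.
Proof.
move=> f0 fn; rewrite fsbig_ord -esum_fset; [|exact: finite_II|by []].
rewrite [RHS]esum_mkcond; apply: eq_esum => j _.
by case: ifPn => // /negP; rewrite inE /= => /negP; rewrite -leqNgt => /fn.
Qed.

Lemma esum_ge_term (T : choiceType) (I : set T) (a : T -> \bar R) t :
  I t -> (forall i, I i -> 0 <= a i) -> a t <= \esum_(i in I) a i.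
Proof.
move=> It a0; apply: esum_ge; exists [set t]; last by rewrite fsbig_set1.
by split; [exact: finite_set1|move=> _ ->].
Qed.

Lemma adde_id_eq0 (x y : \bar R) : x \is a fin_num -> x + y = x -> y = 0.
Proof. by move=> xf xy; rewrite -(addeK y xf) [y + x]addeC xy subee. Qed.

Lemma ereal_cvg0_near (G : nat -> \bar R) :
  (forall e : R, (0 < e)%R -> \forall n \near \oo, 0 <= G n <= e%:E) ->
  G @ \oo --> 0.
Proof.
move=> G_small; have G_fin : \forall n \near \oo, G n \is a fin_num.
  apply: filterS (G_small 1%R ltr01) => n /andP[G0 G1].
  by rewrite ge0_fin_numE // (le_lt_trans G1) ?ltry.
apply/fine_cvgP; split=> //; apply/cvgr0Pnorm_lt => e e0.
apply: filterS2 G_fin (G_small _ (divr_gt0 e0 (ltr0Sn _ 1))) => n Gn /andP[G0 Ge].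
rewrite -(fineK Gn) !lee_fin in G0 Ge.
by rewrite ger0_norm // (le_lt_trans Ge) // ltr_pdivrMr // ltr_pMr // ltr1n.
Qed.

End ExtendedSums.

Section WeightedSums.
Variables (R : realType) (v : nat -> R).
Hypothesis v_gt0 : forall j, (0 < v j)%R.
Hypothesis v_sum1 : (\esum_(j in [set: nat]) (v j)%:E = 1)%E.
Local Open Scope ereal_scope.

Let v_ge0 j : (0 <= v j)%R. Proof. exact: ltW. Qed.

Lemma weight_le1 k : (v k <= 1)%R.
Proof.
by rewrite -lee_fin -v_sum1; apply: esum_ge_term => // j _; rewrite lee_fin.
Qed.

Lemma esum_weighted_eq (x y : nat -> R) : (forall i, 0 <= x i <= y i)%R ->
  \esum_(i in [set: nat]) (v i * y i)%:E = \esum_(i in [set: nat]) (v i * x i)%:E ->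
  \esum_(i in [set: nat]) (v i * x i)%:E \is a fin_num ->
  forall i, x i = y i.
Proof.
move=> xy Exy fin i.
have d0 k : (0 <= v k * (y k - x k))%R.
  by case/andP: (xy k) => _ h; rewrite mulr_ge0 // subr_ge0.
have : \esum_(k in [set: nat]) (v k * x k)%:E +
       \esum_(k in [set: nat]) (v k * (y k - x k))%:E =
       \esum_(k in [set: nat]) (v k * x k)%:E.
  rewrite -esumD; last 2 first.
  - by move=> k _; case/andP: (xy k) => h _; rewrite lee_fin mulr_ge0.
  - by move=> k _; rewrite lee_fin.
  by rewrite -Exy; apply: eq_esum => k _; rewrite -EFinD -mulrDr addrC subrK.
move=> /(adde_id_eq0 fin) D0.
have : (v i * (y i - x i))%:E <= 0.
  by rewrite -D0; apply: esum_ge_term => // k _; rewrite lee_fin.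
rewrite lee_fin pmulr_rle0 // subr_le0 => yx.
by apply/eqP; rewrite eq_le yx andbT; case/andP: (xy i).
Qed.

Lemma weight_tail_small (e : R) : (0 < e)%R ->
  exists N, \sum_(N <= k <oo) (v k)%:E <= e%:E.
Proof.
move=> e0; have v0 k : 0 <= (v k)%:E by rewrite lee_fin.
have fin : \sum_(0 <= k <oo) (v k)%:E < +oo by rewrite nneseries_esumT ?v_sum1 ?ltry.
have /fine_cvgP[[N1 _ tail_fin] tail_cvg] := nneseries_tail_cvg fin (fun k _ => v0 k).
have [N2 _ tail_small] := cvgr0_norm_lt _ tail_cvg _ e0.
exists (maxn N1 N2); have := tail_fin _ (leq_maxl N1 N2).
have := tail_small _ (leq_maxr N1 N2) => /= small /fineK <-.
by rewrite lee_fin (le_trans (ler_norm _) (ltW small)).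
Qed.

(* Dominated convergence for the probability vector [v]: the terms [w n j]
   are bounded by 1, so the tail of [v] controls the whole sum uniformly. *)
Lemma esum_weighted_near0 (w : nat -> nat -> R) :
  (forall n j, 0 <= w n j <= 1)%R ->
  (forall j (e : R), (0 < e)%R -> \forall n \near \oo, (w n j <= e)%R) ->
  forall e : R, (0 < e)%R ->
  \forall n \near \oo, \esum_(j in [set: nat]) (v j * w n j)%:E <= e%:E.
Proof.
move=> w01 w_small e e0; have [N tailN] := weight_tail_small (divr_gt0 e0 (ltr0Sn _ 1)).
have vw0 n k : 0 <= (v k * w n k)%:E.
  by rewrite lee_fin mulr_ge0 //; case/andP: (w01 n k).
near=> n.
rewrite -nneseries_esumT // (nneseries_split 0 N) // add0n.
have -> : e%:E = (e / 2)%:E + (e / 2)%:E by rewrite -EFinD -splitr.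
apply: leeD; last first.
  apply: le_trans tailN; apply: lee_nneseries => k _ //.
  by rewrite lee_fin ler_piMr //; case/andP: (w01 n k).
have wn_small : forall j : 'I_N, (w n j <= e / 2 / N.+1%:R)%R.
  by near: n; apply: filter_forall => j; apply: w_small; rewrite !divr_gt0.
rewrite sumEFin lee_fin big_mkord.
apply: le_trans (_ : \sum_(j < N) (e / 2 / N.+1%:R) <= _)%R.
  apply: ler_sum => j _; apply: le_trans (wn_small j).
  by rewrite ler_piMl // ?weight_le1 //; case/andP: (w01 n j).
rewrite sumr_const card_ord -(mulr_natr (e / 2 / N.+1%:R)) -[leRHS]mulr1 -mulrA.
rewrite ler_wpM2l ?divr_ge0 ?(ltW e0) // mulrC ler_pdivrMr ?ltr0Sn //.
by rewrite mul1r ler_nat.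
Unshelve. all: by end_near.
Qed.

End WeightedSums.

Section UnitInterval.
Variable R : realFieldType.

Lemma expr_sub_le (a b : R) k : 0 <= b -> b <= a -> a <= 1 ->
  a ^+ k - b ^+ k <= k%:R * (a - b).
Proof.
move=> b0 ba a1; have a0 := le_trans b0 ba.
elim: k => [|k IH]; first by rewrite !expr0 subrr mul0r.
have -> : a ^+ k.+1 - b ^+ k.+1 = a * (a ^+ k - b ^+ k) + b ^+ k * (a - b).
  by rewrite !exprS; ring.
rewrite mulrSr mulrDl mul1r lerD //.
  by rewrite (le_trans _ IH) // ler_piMl // subr_ge0 lerXn2r.
by rewrite ler_piMl ?subr_ge0 // exprn_ile1 // (le_trans ba).
Qed.

Lemma prod_sub_le n (x y : nat -> R) :
  (forall j, 0 <= y j <= x j) -> (forall j, x j <= 1) ->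
  \prod_(j < n) x j - \prod_(j < n) y j <= \sum_(j < n) (x j - y j).
Proof.
move=> yx x1; elim: n => [|n IH]; first by rewrite !big_ord0 subrr.
rewrite !big_ord_recr /=.
set X := \prod_(j < n) x j; set Y := \prod_(j < n) y j.
have [y0 yxn] := andP (yx n).
have Y0 : 0 <= Y by apply: prodr_ge0 => j _; case/andP: (yx j).
have YX : Y <= X by apply: ler_prod => j _; exact: yx.
have X1 : X <= 1.
  by apply: prodr_ile1 => j _; case/andP: (yx j) => yj0 /(le_trans yj0) ->; exact: x1.
have -> : X * x n - Y * y n = x n * (X - Y) + Y * (x n - y n) by ring.
by rewrite lerD // ?(le_trans _ IH) // ler_piMl ?subr_ge0 // (le_trans YX).
Qed.

Lemma prod_expr_sub_le n (k : nat -> nat) (a b : nat -> R) :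
  (forall j, 0 <= b j <= a j) -> (forall j, a j <= 1) ->
  \prod_(j < n) a j ^+ k j - \prod_(j < n) b j ^+ k j <=
  \sum_(j < n) (k j)%:R * (a j - b j).
Proof.
move=> ba a1; have a0 j : 0 <= a j by case/andP: (ba j); exact: le_trans.
rewrite (le_trans (@prod_sub_le n (fun j => a j ^+ k j) (fun j => b j ^+ k j) _ _)) //.
- by move=> j; have [b0 baj] := andP (ba j); rewrite exprn_ge0 //= lerXn2r ?nnegrE.
- by move=> j; rewrite exprn_ile1.
- by apply: ler_sum => j _; have [b0 baj] := andP (ba j); exact: expr_sub_le.
Qed.

Lemma one_sub_prod_expr_le n (k : nat -> nat) (b : nat -> R) :
  (forall j, 0 <= b j <= 1) ->
  1 - \prod_(j < n) b j ^+ k j <= \sum_(j < n) (k j)%:R * (1 - b j).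
Proof.
move=> b01; have := @prod_expr_sub_le n k (fun _ => 1) b b01 (fun _ => lexx 1).
by rewrite big1 // => j _; rewrite expr1n.
Qed.

Lemma sum_gt0_witness n (k : nat -> nat) :
  (0 < \sum_(j < n) k j)%N -> exists j : 'I_n, (0 < k j)%N.
Proof.
rewrite lt0n sum_nat_eq0 => /forallPn[j]; rewrite -lt0n => kj; by exists j.
Qed.

Lemma prod_expr_lt1 n (k : nat -> nat) (b : nat -> R) :
  (forall j, 0 <= b j < 1) -> (0 < \sum_(j < n) k j)%N ->
  \prod_(j < n) b j ^+ k j < 1.
Proof.
move=> b01 /sum_gt0_witness[j kj]; rewrite (bigD1 j) //=.
have [bj0 bj1] := andP (b01 j).
apply: le_lt_trans (_ : b j ^+ k j < 1); last by rewrite exprn_ilt1 // -lt0n.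
apply: ler_piMr; first exact: exprn_ge0.
by apply: prodr_ile1 => l _; have [bl0 /ltW bl1] := andP (b01 l); rewrite exprn_ge0 ?exprn_ile1.
Qed.

(* Write the product as [b j * P'] where [P'] has total exponent [>= 1], so
   [P' < 1]; then [1 - b j P' = (1 - b j) + b j (1 - P') < (1 - b j) + (1 - P')]. *)
Lemma one_sub_prod_expr_lt n (k : nat -> nat) (b : nat -> R) :
  (forall j, 0 <= b j < 1) -> (1 < \sum_(j < n) k j)%N ->
  1 - \prod_(j < n) b j ^+ k j < \sum_(j < n) (k j)%:R * (1 - b j).
Proof.
move=> b01 k_gt1; have [j kj] := sum_gt0_witness (ltnW k_gt1).
set k' := fun l => (k l - (l == j))%N.
have k'_off (l : 'I_n) : l != j -> k' l = k l.
  by move=> /negPf lj; rewrite /k' (_ : (l == j :> nat) = false) ?subn0.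
have k'_j : k j = (k' j).+1 by rewrite /k' eqxx subn1 prednK.
have prodE : \prod_(l < n) b l ^+ k l = b j * \prod_(l < n) b l ^+ k' l.
  rewrite (bigD1 j) // [in RHS](bigD1 j) //= k'_j exprS -mulrA.
  by congr (_ * (_ * _)); apply: eq_bigr => l /k'_off ->.
have sumE : \sum_(l < n) (k l)%:R * (1 - b l) =
            (1 - b j) + \sum_(l < n) (k' l)%:R * (1 - b l).
  rewrite (bigD1 j) // [in RHS](bigD1 j) //= k'_j -addn1 natrD mulrDl mul1r.
  by rewrite [RHS]addrA [in RHS](addrC (1 - b j)); congr (_ + _); apply: eq_bigr => l /k'_off ->.
have sumkE : (\sum_(l < n) k l = (\sum_(l < n) k' l).+1)%N.
  rewrite (bigD1 j) // [in RHS](bigD1 j) //= k'_j addSn.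
  by congr (_ + _).+1; apply: eq_bigr => l /k'_off ->.
have k'_gt0 : (0 < \sum_(l < n) k' l)%N by move: k_gt1; rewrite sumkE ltnS.
have P'lt1 := prod_expr_lt1 b01 k'_gt0.
have P'le : 1 - \prod_(l < n) b l ^+ k' l <= \sum_(l < n) (k' l)%:R * (1 - b l).
  by apply: one_sub_prod_expr_le => l; have [-> /ltW] := andP (b01 l).
have [bj0 bj1] := andP (b01 j).
rewrite prodE sumE.
set P' := \prod_(l < n) _ in P'lt1 P'le *.
have : 0 < (1 - b j) * (1 - P') by rewrite mulr_gt0 // subr_gt0.
move: P'le; set S' := \sum_(l < n) _; nra.
Qed.

Lemma natr_mulr_le (K : nat) (x e : R) : 0 <= e -> x <= e / (K%:R + 1) -> K%:R * x <= e.
Proof.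
move=> e0 x_le; have K1 : 0 < K%:R + 1 :> R by rewrite ltr_wpDl.
apply: le_trans (ler_wpM2l (ler0n _ K) x_le) _.
by rewrite mulrCA ler_piMr // ler_pdivrMr // mul1r lerDl.
Qed.

End UnitInterval.

Lemma sumn_nth z : sumn z = (\sum_(j < size z) nth 0%N z j)%N.
Proof. by rewrite sumnE (big_nth 0%N) big_mkord. Qed.

Section Expectation.
Variables (R : realType) (p : nat -> seq nat -> R).
Hypothesis p_law : is_offspring_law p.
Local Open Scope ereal_scope.

Let p_ge0 i z : (0 <= p i z)%R. Proof. by case: p_law. Qed.

Lemma Ex_ge0 i g : (forall z, 0 <= g z)%R -> 0 <= Ex p i g.
Proof. by move=> g0; apply: esum_ge0 => z _; rewrite lee_fin mulr_ge0. Qed.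

Lemma le_Ex i g h : (forall z, g z <= h z)%R -> Ex p i g <= Ex p i h.
Proof. by move=> gh; apply: le_esum => z _; rewrite lee_fin ler_wpM2l. Qed.

Lemma ExZl i g c : (0 <= c)%R -> (forall z, 0 <= g z)%R ->
  Ex p i (fun z => c * g z)%R = c%:E * Ex p i g.
Proof.
move=> c0 g0; rewrite /Ex -esumZl //; last by move=> z _; rewrite lee_fin mulr_ge0.
by apply: eq_esum => z _; rewrite -EFinM mulrCA.
Qed.

Lemma Ex_cst i c : (0 <= c)%R -> Ex p i (fun _ => c) = c%:E.
Proof.
move=> c0; rewrite -[X in Ex _ _ X](funext (fun z => mulr1 c)) ExZl //.
have [_ p1] := p_law; rewrite /Ex (eq_esum (b := fun z => (p i z)%:E)) ?p1 ?mule1 //.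
by move=> z _; rewrite mulr1.
Qed.

Lemma ExD i g h : (forall z, 0 <= g z)%R -> (forall z, 0 <= h z)%R ->
  Ex p i (fun z => g z + h z)%R = Ex p i g + Ex p i h.
Proof.
move=> g0 h0; rewrite /Ex -esumD => [|z _|z _]; rewrite ?lee_fin ?mulr_ge0 //.
by apply: eq_esum => z _; rewrite mulrDr.
Qed.

Lemma Ex_bounded i g c : (forall z, 0 <= g z <= c)%R -> 0 <= Ex p i g <= c%:E.
Proof.
move=> gc; have c0 : (0 <= c)%R by case/andP: (gc [::]); exact: le_trans.
rewrite Ex_ge0 => [|z]; last by case/andP: (gc z).
by rewrite -(Ex_cst i c0) le_Ex // => z; case/andP: (gc z).
Qed.

Lemma fineK_Ex i g c : (forall z, 0 <= g z <= c)%R -> (fine (Ex p i g))%:E = Ex p i g.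
Proof.
move=> gc; have /andP[g0 g_le] := Ex_bounded i gc.
by rewrite fineK // ge0_fin_numE // (le_lt_trans g_le (ltry _)).
Qed.

Lemma ExB i g h c : (forall z, 0 <= g z)%R -> (forall z, g z <= h z <= c)%R ->
  (fine (Ex p i h) - fine (Ex p i g))%R = fine (Ex p i (fun z => h z - g z)%R).
Proof.
move=> g0 ghc.
have hb z : (0 <= h z <= c)%R by have [gh ->] := andP (ghc z); rewrite (le_trans (g0 z)).
have gb z : (0 <= g z <= c)%R by have [gh hc] := andP (ghc z); rewrite g0 (le_trans gh).
have db z : (0 <= h z - g z <= c)%R.
  by have [gh hc] := andP (ghc z); rewrite subr_ge0 gh (le_trans _ hc) // lerBlDr lerDl.
have : Ex p i h = Ex p i g + Ex p i (fun z => h z - g z)%R.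
  rewrite -ExD // => [|z]; last by case/andP: (db z).
  by apply: eq_esum => z _; rewrite addrC subrK.
rewrite -(fineK_Ex i hb) -(fineK_Ex i gb) -(fineK_Ex i db) -EFinD => -[->].
by rewrite addrAC subrr add0r.
Qed.

Lemma eq_Ex_supp i g h : (forall z, (0 < p i z)%R -> g z = h z) -> Ex p i g = Ex p i h.
Proof.
move=> gh; apply: eq_esum => z _.
by move: (p_ge0 i z); rewrite le_eqVlt => /predU1P[<-|/gh ->]; rewrite ?mul0r.
Qed.

Lemma le_Ex_supp i g h : (forall z, (0 < p i z)%R -> (g z <= h z)%R) -> Ex p i g <= Ex p i h.
Proof.
move=> gh; apply: le_esum => z _.
by move: (p_ge0 i z); rewrite le_eqVlt => /predU1P[<-|/gh gz]; rewrite ?mul0r // lee_fin ler_wpM2l.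
Qed.

Lemma Ex_ge_atom i g z : (forall z, 0 <= g z)%R -> (p i z * g z)%:E <= Ex p i g.
Proof. by move=> g0; apply: esum_ge_term => // y _; rewrite lee_fin mulr_ge0. Qed.

Lemma Ex_eq0_supp i g : (forall z, 0 <= g z)%R -> Ex p i g = 0 ->
  forall z, (0 < p i z)%R -> g z = 0%R.
Proof.
move=> g0 Eg0 z pz; have := Ex_ge_atom i z g0; rewrite Eg0 lee_fin pmulr_rle0 // => gz.
by apply/eqP; rewrite eq_le gz g0.
Qed.

Lemma Ex_sum_esum i (h : seq nat -> nat -> R) :
  (forall z j, 0 <= h z j)%R -> (forall z j, (size z <= j)%N -> h z j = 0%R) ->
  Ex p i (fun z => \sum_(j < size z) h z j)%R =
  \esum_(j in [set: nat]) Ex p i (fun z => h z j).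
Proof.
move=> h0 h_supp; rewrite /Ex -exchange_esum => [|z j]; last by rewrite lee_fin mulr_ge0.
apply: eq_esum => z _; rewrite (@esum_nat_ord _ _ (size z)).
- by rewrite sumEFin mulr_sumr.
- by move=> j; rewrite lee_fin mulr_ge0.
- by move=> j /h_supp ->; rewrite mulr0.
Qed.

Lemma Mbar_ge0 i j : 0 <= Mbar p i j.
Proof. exact: Ex_ge0. Qed.

Lemma Mpow_ge0 n i j : 0 <= Mpow p n i j.
Proof.
elim: n i j => [|n IH] i j /=; first by case: eqP.
by apply: esum_ge0 => k _; rewrite mule_ge0 ?Mbar_ge0.
Qed.

Definition Mmul (c : nat -> R) (i : nat) : \bar R :=
  \esum_(j in [set: nat]) Mbar p i j * (c j)%:E.

Lemma Ex_mean_sum i (c : nat -> R) : (forall j, 0 <= c j)%R ->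
  Ex p i (fun z => \sum_(j < size z) (nth 0%N z j)%:R * c j)%R =
  Mmul c i.
Proof.
move=> c0; rewrite (@Ex_sum_esum i (fun z j => (nth 0%N z j)%:R * c j)%R) => [|z j|z j zj].
- apply: eq_esum => j _; rewrite muleC -ExZl //.
  by congr Ex; apply: funext => z; rewrite mulrC.
- by rewrite mulr_ge0.
- by rewrite nth_default ?mul0r.
Qed.

Lemma Mi_Mmul i : Mi p i = Mmul (fun _ => 1%R) i.
Proof.
rewrite -Ex_mean_sum //; congr Ex; apply: funext => z.
by rewrite sumn_nth natr_sum; apply: eq_bigr => j _; rewrite mulr1.
Qed.

End Expectation.

Section GeneratingFunction.
Variables (R : realType) (p : nat -> seq nat -> R).
Hypothesis p_law : is_offspring_law p.
Local Open Scope ereal_scope.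

Definition prodpow (s : nat -> R) (z : seq nat) : R :=
  \prod_(j < size z) s j ^+ nth 0%N z j.

Lemma F1E s i : F1 p s i = fine (Ex p i (prodpow s)). Proof. by []. Qed.

Lemma prodpow_01 s z : unit_cube s -> (0 <= prodpow s z <= 1)%R.
Proof.
move=> s01; rewrite prodr_ge0 ?prodr_ile1 // => j _; have [s0 s1] := andP (s01 j).
  by rewrite exprn_ge0 ?exprn_ile1.
exact: exprn_ge0.
Qed.

Lemma le_prodpow s t z : unit_cube s -> (forall j, s j <= t j)%R ->
  (prodpow s z <= prodpow t z)%R.
Proof.
move=> s01 st; apply: ler_prod => j _; have [s0 _] := andP (s01 j).
by rewrite exprn_ge0 //= lerXn2r // nnegrE (le_trans s0).
Qed.

Lemma prodpow1 z : prodpow (fun _ => 1%R) z = 1%R.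
Proof. by rewrite /prodpow big1 // => j _; rewrite expr1n. Qed.

Lemma prodpow_le_factor s z j : unit_cube s -> (0 < nth 0%N z j)%N ->
  (prodpow s z <= s j)%R.
Proof.
move=> s01 zj; have j_lt : (j < size z)%N.
  by rewrite ltnNge; apply: contraTN zj => /(nth_default 0%N) ->.
rewrite /prodpow (bigD1 (Ordinal j_lt)) //=; have [sj0 sj1] := andP (s01 j).
apply: le_trans (_ : s j ^+ nth 0%N z j <= _)%R.
  apply: ler_piMr; first exact: exprn_ge0.
  by apply: prodr_ile1 => l _; have [sl0 sl1] := andP (s01 l); rewrite exprn_ge0 ?exprn_ile1.
by case: (nth 0%N z j) zj => // m _; rewrite exprS ler_piMr ?exprn_ile1.
Qed.

Lemma prodpow_sub_le a b z : unit_cube a -> (forall j, b j <= a j)%R ->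
  (forall j, 0 <= b j)%R ->
  (prodpow a z - prodpow b z <= \sum_(j < size z) (nth 0%N z j)%:R * (a j - b j))%R.
Proof.
move=> a01 ba b0; apply: prod_expr_sub_le => j; first by rewrite b0 ba.
by case/andP: (a01 j).
Qed.

Lemma one_sub_prodpow_le q z : unit_cube q ->
  (1 - prodpow q z <= \sum_(j < size z) (nth 0%N z j)%:R * (1 - q j))%R.
Proof.
move=> q01; rewrite -[X in (X - _)%R](prodpow1 z).
by apply: prodpow_sub_le => [l|l|l]; rewrite ?ler01 ?lexx //; case/andP: (q01 l).
Qed.

Lemma prodpow_single s z : sumn z = 1%N ->
  prodpow s z = (\sum_(j < size z) (nth 0%N z j)%:R * s j)%R.
Proof.
elim: z s => [//|a z IH] s /= z1.
rewrite /prodpow /= big_ord_recl [in RHS]big_ord_recl.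
under eq_bigr => k _ do rewrite lift0 /=.
under [in RHS]eq_bigr => k _ do rewrite lift0 /=.
case: a z1 => [|[|//]] /= z1.
  by rewrite expr0 mul1r mul0r add0r; exact: (IH (fun j => s j.+1)).
have /eqP := z1; rewrite add1n eqSS sumn_nth sum_nat_eq0 => /forallP z0.
rewrite big1 => [|j _]; last by rewrite (eqP (z0 j)) expr0.
by rewrite big1 => [|j _]; rewrite ?(eqP (z0 j)) ?mul0r // expr1 mulr1 addr0 mul1r.
Qed.

Lemma F1_cube s : unit_cube s -> unit_cube (F1 p s).
Proof.
move=> s01 i; have s_01 z := prodpow_01 z s01.
by rewrite F1E -!lee_fin (fineK_Ex p_law i s_01); exact: Ex_bounded.
Qed.

Lemma le_F1 s t i : unit_cube s -> unit_cube t -> (forall j, s j <= t j)%R ->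
  (F1 p s i <= F1 p t i)%R.
Proof.
move=> s01 t01 st; have s_01 z := prodpow_01 z s01; have t_01 z := prodpow_01 z t01.
rewrite !F1E -lee_fin (fineK_Ex p_law i s_01) (fineK_Ex p_law i t_01).
by apply: le_Ex => // z; exact: le_prodpow.
Qed.

Lemma Fn_cube n s : unit_cube s -> unit_cube (Fn p n s).
Proof. by move=> s01; elim: n => //= n IH; exact: F1_cube. Qed.

Lemma le_Fn n s t : unit_cube s -> unit_cube t -> (forall j, s j <= t j)%R ->
  forall i, (Fn p n s i <= Fn p n t i)%R.
Proof.
move=> s01 t01; elim: n => [//|n IH] st i.
by apply: le_F1; [exact: Fn_cube|exact: Fn_cube|exact: IH].
Qed.

Lemma one_sub_F1 s i : unit_cube s ->
  (1 - F1 p s i)%:E = Ex p i (fun z => 1 - prodpow s z)%R.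
Proof.
move=> s01; have s_01 z := prodpow_01 z s01.
have d01 z : (0 <= 1 - prodpow s z <= 1)%R.
  by have [s0 s1] := andP (s_01 z); rewrite subr_ge0 s1 lerBlDr lerDl.
rewrite -(fineK_Ex p_law i d01) F1E.
have := @ExB _ _ p_law i (prodpow s) (fun _ => 1%R) 1%R.
rewrite Ex_cst //= => <- // z; first by case/andP: (s_01 z).
by rewrite lexx andbT; case/andP: (s_01 z).
Qed.

Lemma F1_sub_le_mean a b i : unit_cube a -> unit_cube b -> (forall j, b j <= a j)%R ->
  (F1 p a i - F1 p b i)%:E <= Mmul p (fun j => a j - b j)%R i.
Proof.
move=> a01 b01 ba; have b0 j : (0 <= b j)%R by case/andP: (b01 j).
have [a_01 b_01] := (fun z => prodpow_01 z a01, fun z => prodpow_01 z b01).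
have d01 z : (0 <= prodpow a z - prodpow b z <= 1)%R.
  have [_ a1] := andP (a_01 z); have [bz0 _] := andP (b_01 z).
  by rewrite subr_ge0 le_prodpow // lerBlDr (le_trans a1) // lerDl.
rewrite !F1E (@ExB _ _ p_law i _ _ 1%R) => [|z|z]; last 2 first.
- by case/andP: (b_01 z).
- by rewrite le_prodpow //=; case/andP: (a_01 z).
rewrite (fineK_Ex p_law i d01) -Ex_mean_sum // => [|j]; last by rewrite subr_ge0.
by apply: le_Ex => // z; exact: prodpow_sub_le.
Qed.

Lemma F1_Mmul_of_single : (forall i z, (0 < p i z)%R -> sumn z = 1%N) ->
  forall i s, unit_cube s -> F1 p s i = fine (Mmul p s i).
Proof.
move=> single i s s01.
rewrite F1E (@eq_Ex_supp _ _ p_law i _ (fun z => \sum_(j < size z) (nth 0%N z j)%:R * s j)%R).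
  by rewrite Ex_mean_sum // => j; case/andP: (s01 j).
by move=> z pz; exact: prodpow_single (single i z pz).
Qed.

End GeneratingFunction.

Section Extinction.
Variables (R : realType) (p : nat -> seq nat -> R) (v : nat -> R) (B : R).
Hypothesis p_law : is_offspring_law p.
Hypothesis v_gt0 : forall j, (0 < v j)%R.
Hypothesis v_sum1 : (\esum_(j in [set: nat]) (v j)%:E = 1)%E.
Hypothesis B_ge0 : (0 <= B)%R.
Hypothesis Mbar_le : forall i j, (Mbar p i j <= (B * v j)%:E)%E.
Local Open Scope ereal_scope.

Let v_ge0 j : (0 <= v j)%R. Proof. exact: ltW. Qed.

Lemma Mmul_le_weighted i (w : nat -> R) : (forall j, 0 <= w j)%R ->
  Mmul p w i <= B%:E * \esum_(j in [set: nat]) (v j * w j)%:E.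
Proof.
move=> w0; rewrite -esumZl // => [|j _]; last by rewrite lee_fin mulr_ge0.
apply: le_esum => j _; rewrite -EFinM mulrA EFinM.
by apply: lee_wpmul2r; rewrite ?lee_fin.
Qed.

Definition Fn0 n : nat -> R := Fn p n (fun _ => 0%R).

Lemma unit_cube0 : unit_cube (fun _ => 0%R : R).
Proof. by move=> j; rewrite lexx ler01. Qed.

Lemma Fn0_cube n : unit_cube (Fn0 n).
Proof. exact: (Fn_cube p_law n unit_cube0). Qed.

Lemma le_Fn0_succ n i : (Fn0 n i <= Fn0 n.+1 i)%R.
Proof.
elim: n i => [|n IH] i; first by case/andP: (Fn0_cube 1 i).
by apply: (le_F1 p_law); [exact: (Fn0_cube n)|exact: (Fn0_cube n.+1)|exact: IH].
Qed.

Lemma le_Fn0 m n j : (m <= n)%N -> (Fn0 m j <= Fn0 n j)%R.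
Proof.
move=> /subnK <-; elim: (n - m)%N => [|k IH]; first by rewrite add0n.
exact: le_trans IH (le_Fn0_succ _ _).
Qed.

(* The extinction probabilities [q_j]: [F_j(n; 0)] increases to [q_j]. *)
Definition ext_prob j : R := sup [set Fn0 n j | n in [set: nat]].

Let ext_prob_has_sup j : has_sup [set Fn0 n j | n in [set: nat]].
Proof.
split; first by exists (Fn0 0 j), 0%N.
by exists 1%R => _ [n _ <-]; case/andP: (Fn0_cube n j).
Qed.

Lemma Fn0_le_ext_prob n j : (Fn0 n j <= ext_prob j)%R.
Proof. by apply: sup_upper_bound; [exact: ext_prob_has_sup|exists n]. Qed.

Lemma ext_prob_cube : unit_cube ext_prob.
Proof.
move=> j; apply/andP; split.
  by apply: le_trans (Fn0_le_ext_prob 0 j); case/andP: (Fn0_cube 0 j).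
by apply: ge_sup; [exists (Fn0 0 j), 0%N|move=> _ [n _ <-]; case/andP: (Fn0_cube n j)].
Qed.

Lemma ext_prob_gap01 n j : (0 <= ext_prob j - Fn0 n j <= 1)%R.
Proof.
rewrite subr_ge0 Fn0_le_ext_prob /= lerBlDr.
have [f0 _] := andP (Fn0_cube n j); have [_ q1] := andP (ext_prob_cube j).
by rewrite (le_trans q1) // lerDl.
Qed.

Lemma F1_ext_prob_sub_near (e : R) : (0 < e)%R ->
  \forall n \near \oo, forall i, (F1 p ext_prob i - Fn0 n.+1 i <= e)%R.
Proof.
move=> e0; have eB : (0 < e / (B + 1))%R by rewrite divr_gt0 // ltr_wpDl.
have gap_near j (d : R) : (0 < d)%R -> \forall n \near \oo, (ext_prob j - Fn0 n j <= d)%R.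
  move=> d0; have [_ [n0 _ <-] n0_close] := sup_adherent d0 (ext_prob_has_sup j).
  exists n0 => // n /= n0n; rewrite lerBlDr addrC -lerBlDr.
  exact: le_trans (ltW n0_close) (le_Fn0 j n0n).
have [N _ gapN] := esum_weighted_near0 v_gt0 v_sum1 ext_prob_gap01 gap_near eB.
exists N => // n /gapN gap i.
rewrite -lee_fin; apply: le_trans (F1_sub_le_mean p_law i ext_prob_cube (Fn0_cube n)
  (fun j => Fn0_le_ext_prob n j)) _.
apply: le_trans (Mmul_le_weighted _ (fun j => proj1 (andP (ext_prob_gap01 n j)))) _.
apply: le_trans (lee_wpmul2l (lee_tofin B_ge0) gap) _.
rewrite -EFinM lee_fin mulrCA ler_piMr ?(ltW e0) //.
by rewrite ler_pdivrMr ?ltr_wpDl // mul1r lerDl.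
Qed.

Lemma F1_ext_prob : F1 p ext_prob = ext_prob.
Proof.
apply: funext => i; apply/eqP; rewrite eq_le; apply/andP; split; last first.
  apply: ge_sup; first by exists (Fn0 0 i), 0%N.
  move=> _ [[|n] _ <-]; first by case/andP: (F1_cube p_law ext_prob_cube i).
  by apply: (le_F1 p_law) => //; [exact: Fn0_cube|exact: ext_prob_cube|exact: Fn0_le_ext_prob].
apply/ler_addgt0Pr => e /F1_ext_prob_sub_near near_e.
have [n _ /(_ n (leqnn n)) /(_ i) close] := near_e.
move: (Fn0_le_ext_prob n.+1 i) close; lra.
Qed.

Hypothesis v_left_eigen :
  forall j, \esum_(i in [set: nat]) (v i)%:E * Mbar p i j = (v j)%:E.

Lemma esum_v_Mmul (c : nat -> R) : (forall j, 0 <= c j)%R ->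
  \esum_(i in [set: nat]) (v i)%:E * Mmul p c i = \esum_(j in [set: nat]) (v j * c j)%:E.
Proof.
move=> c0; have vMc0 i j : 0 <= (v i)%:E * Mbar p i j * (c j)%:E.
  by rewrite !mule_ge0 ?lee_fin ?Mbar_ge0.
transitivity (\esum_(i in [set: nat]) \esum_(j in [set: nat]) (v i)%:E * Mbar p i j * (c j)%:E).
  apply: eq_esum => i _; rewrite /Mmul -esumZl // => [|j _]; last first.
    by rewrite mule_ge0 ?Mbar_ge0 ?lee_fin.
  by apply: eq_esum => j _; rewrite muleA.
rewrite exchange_esum //; apply: eq_esum => j _.
under eq_esum do rewrite muleC.
rewrite esumZl // => [|i _]; last by rewrite mule_ge0 ?Mbar_ge0 ?lee_fin.
by rewrite v_left_eigen -EFinM mulrC.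
Qed.

Lemma esum_v_fin_num (c : nat -> R) : (forall j, 0 <= c j <= 1)%R ->
  \esum_(j in [set: nat]) (v j * c j)%:E \is a fin_num.
Proof.
move=> c01; rewrite ge0_fin_numE ?esum_ge0 // => [|j _]; last first.
  by rewrite lee_fin mulr_ge0 //; case/andP: (c01 j).
apply: le_lt_trans (ltry 1%R); rewrite -v_sum1; apply: le_esum => j _.
by rewrite lee_fin ler_piMr //; case/andP: (c01 j).
Qed.

Lemma Mmul_fin_num (c : nat -> R) i : (forall j, 0 <= c j <= 1)%R ->
  Mmul p c i \is a fin_num.
Proof.
move=> c01; have c0 j : (0 <= c j)%R by case/andP: (c01 j).
rewrite ge0_fin_numE ?esum_ge0 // => [|j _]; last by rewrite mule_ge0 ?Mbar_ge0 ?lee_fin.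
apply: le_lt_trans (Mmul_le_weighted i c0) _.
by rewrite -(fineK (esum_v_fin_num c01)) -EFinM ltry.
Qed.

Let esum_v_fine_Mmul (c : nat -> R) : (forall j, 0 <= c j <= 1)%R ->
  \esum_(i in [set: nat]) (v i * fine (Mmul p c i))%:E = \esum_(j in [set: nat]) (v j * c j)%:E.
Proof.
move=> c01; rewrite -[RHS]esum_v_Mmul => [|j]; last exact: proj1 (andP (c01 j)).
by apply: eq_esum => i _; rewrite EFinM fineK // Mmul_fin_num.
Qed.

(* Since [v M = v], a vector bounded by its image under [M] (or bounding it)
   is a fixed point of [M]. *)
Lemma Mmul_eq_of_ge (c : nat -> R) : (forall j, 0 <= c j <= 1)%R ->
  (forall i, (c i)%:E <= Mmul p c i) -> forall i, Mmul p c i = (c i)%:E.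
Proof.
move=> c01 c_le i; rewrite -[LHS](fineK (Mmul_fin_num i c01)); congr EFin; apply/esym.
apply: (esum_weighted_eq v_gt0 (x := c) (y := fun i => fine (Mmul p c i))) => [k||].
- by have [c0 _] := andP (c01 k); rewrite c0 -lee_fin fineK ?Mmul_fin_num ?c_le.
- exact: esum_v_fine_Mmul.
- exact: esum_v_fin_num.
Qed.

Lemma Mmul_eq_of_le (c : nat -> R) : (forall j, 0 <= c j <= 1)%R ->
  (forall i, Mmul p c i <= (c i)%:E) -> forall i, Mmul p c i = (c i)%:E.
Proof.
move=> c01 le_c i; rewrite -[LHS](fineK (Mmul_fin_num i c01)); congr EFin.
apply: (esum_weighted_eq v_gt0 (x := fun i => fine (Mmul p c i)) (y := c)) => [k||];
  rewrite ?esum_v_fine_Mmul //.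
- rewrite -!lee_fin fineK ?Mmul_fin_num // le_c andbT.
  by apply: esum_ge0 => j _; rewrite mule_ge0 ?Mbar_ge0 ?lee_fin //; case/andP: (c01 j).
- exact: esum_v_fin_num.
Qed.

Hypothesis irreducible : forall i j, exists n, 0 < Mpow p n.+1 i j.

Let p_ge0 i z : (0 <= p i z)%R. Proof. by case: p_law. Qed.

Lemma ext_prob_lt1_Mbar k j : 0 < Mbar p k j -> (ext_prob j < 1)%R -> (ext_prob k < 1)%R.
Proof.
move=> Mkj qj.
have [z [pz zj]] : exists z, (0 < p k z)%R /\ (0 < nth 0%N z j)%N.
  apply: contrapT => none; move: Mkj.
  rewrite /Mbar (@eq_Ex_supp _ _ p_law k _ (fun _ => 0%R)) ?Ex_cst ?ltxx // => z pz.
  by apply/eqP; rewrite pnatr_eq0 -leqn0 leqNgt; apply/negP => zj; apply: none; exists z.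
have gap_ge0 y : (0 <= 1 - prodpow ext_prob y)%R.
  by rewrite subr_ge0; case/andP: (prodpow_01 y ext_prob_cube).
have := Ex_ge_atom p_law k z gap_ge0.
rewrite -(one_sub_F1 p_law) ?F1_ext_prob ?lee_fin; last exact: ext_prob_cube.
move=> atom_le; rewrite -subr_gt0; apply: lt_le_trans atom_le.
rewrite mulr_gt0 // subr_gt0.
exact: le_lt_trans (prodpow_le_factor ext_prob_cube zj) qj.
Qed.

Lemma ext_prob_lt1_Mpow n i j : 0 < Mpow p n i j -> (ext_prob j < 1)%R -> (ext_prob i < 1)%R.
Proof.
elim: n j => [|n IH] j /=; first by case: eqP => [->|_]; rewrite ?ltxx.
move=> Mnij qj; have [k] : exists k, 0 < Mpow p n i k * Mbar p k j.
  apply: contrapT => none; move: Mnij; rewrite esum1 ?ltxx // => k _.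
  apply/eqP; rewrite eq_le mule_ge0 ?Mpow_ge0 ?Mbar_ge0 // andbT leNgt.
  by apply/negP => Mk; apply: none; exists k.
rewrite mule_ge0_gt0 ?Mpow_ge0 ?Mbar_ge0 // => /andP[Mik Mkj].
exact: IH Mik (ext_prob_lt1_Mbar Mkj qj).
Qed.

Lemma ext_prob_lt1_all j : (ext_prob j < 1)%R -> forall i, (ext_prob i < 1)%R.
Proof. by move=> qj i; have [n Mij] := irreducible i j; exact: ext_prob_lt1_Mpow Mij qj. Qed.

Lemma Mmul_one_sub_ext_prob i :
  Mmul p (fun j => 1 - ext_prob j)%R i = (1 - ext_prob i)%:E.
Proof.
have q01 j : (0 <= 1 - ext_prob j <= 1)%R.
  by have [q0 q1] := andP (ext_prob_cube j); rewrite subr_ge0 q1 lerBlDr lerDl.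
apply: Mmul_eq_of_ge => // k; rewrite -{1}F1_ext_prob (one_sub_F1 p_law _ ext_prob_cube).
rewrite -Ex_mean_sum // => [|l]; last by case/andP: (q01 l).
by apply: le_Ex => // z; exact: one_sub_prodpow_le ext_prob_cube.
Qed.

(* With [1 - q = M (1 - q)], the first-order bound [1 - prodpow q z <= z . (1 - q)]
   must be an equality almost surely, and it is strict once [z] has two children. *)
Lemma offspring_le1 : (forall i, ext_prob i < 1)%R ->
  forall i z, (0 < p i z)%R -> (sumn z <= 1)%N.
Proof.
move=> q_lt1 i z pz.
pose S y := (\sum_(j < size y) (nth 0%N y j)%:R * (1 - ext_prob j))%R.
pose D y := (1 - prodpow ext_prob y)%R.
have D_ge0 y : (0 <= D y)%R by rewrite subr_ge0; case/andP: (prodpow_01 y ext_prob_cube).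
have D_le y : (D y <= S y)%R by exact: one_sub_prodpow_le ext_prob_cube.
have ExD_eq : Ex p i D = (1 - ext_prob i)%:E.
  by rewrite -(one_sub_F1 p_law _ ext_prob_cube) F1_ext_prob.
have ExS_eq : Ex p i S = (1 - ext_prob i)%:E.
  rewrite -Mmul_one_sub_ext_prob -Ex_mean_sum // => j.
  by rewrite subr_ge0; case/andP: (ext_prob_cube j).
have gap0 : Ex p i (fun y => S y - D y)%R = 0.
  apply: (@adde_id_eq0 _ (Ex p i D)); first by rewrite ExD_eq.
  rewrite -ExD // => [|y]; last by rewrite subr_ge0.
  by rewrite ExD_eq -ExS_eq; congr Ex; apply: funext => y; rewrite addrC subrK.
have gap_ge0 y : (0 <= S y - D y)%R by rewrite subr_ge0.
move: (Ex_eq0_supp p_law gap_ge0 gap0 pz) => /eqP; rewrite subr_eq0 => /eqP SD.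
rewrite leqNgt; apply/negP => z_gt1.
have q01 j : (0 <= ext_prob j < 1)%R by rewrite q_lt1 andbT; case/andP: (ext_prob_cube j).
have := @one_sub_prod_expr_lt _ (size z) (nth 0%N z) ext_prob q01.
by rewrite -sumn_nth -/(prodpow ext_prob z) -/(D z) -/(S z) SD ltxx => /(_ z_gt1).
Qed.

Lemma Mi_eq1 : (forall i z, (0 < p i z)%R -> (sumn z <= 1)%N) -> forall i, Mi p i = 1.
Proof.
move=> le1 i; rewrite (Mi_Mmul p_law) (@Mmul_eq_of_le (fun _ => 1%R)) // => [j|k].
  by rewrite ler01 lexx.
rewrite -(Mi_Mmul p_law) /= -(Ex_cst p_law k ler01); apply: le_Ex_supp => // z pz.
by rewrite lern1 (le1 k z pz).
Qed.

Lemma offspring_eq1 : (forall i z, (0 < p i z)%R -> (sumn z <= 1)%N) ->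
  forall i z, (0 < p i z)%R -> sumn z = 1%N.
Proof.
move=> le1 i z pz; pose childless y := ((sumn y == 0%N)%:R : R).
have total : Mi p i + Ex p i childless = 1.
  rewrite /Mi -ExD // -(Ex_cst p_law i ler01); apply: eq_Ex_supp => // y py.
  by have := le1 i y py; rewrite /childless; case: (sumn y) => [|[|]] //= _; rewrite ?add0r ?addr0.
rewrite Mi_eq1 // in total.
have childless0 := adde_id_eq0 (isT : (1 : \bar R) \is a fin_num) total.
have := Ex_eq0_supp p_law (fun y => ler0n _ _) childless0 pz.
by move: (le1 i z pz); rewrite /childless; case: (sumn z) => [|[|]] // _ /eqP; rewrite pnatr_eq0.
Qed.

Lemma ext_prob1 : F_not_linear p -> forall j, ext_prob j = 1%R.
Proof.
move=> nonlin j; have [_ q1] := andP (ext_prob_cube j).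
apply/eqP; rewrite eq_le q1 /= leNgt; apply/negP => qj; apply: nonlin.
apply: (F1_Mmul_of_single p_law); apply: offspring_eq1; apply: offspring_le1.
exact: ext_prob_lt1_all qj.
Qed.

Lemma Qsup_near0 : F_not_linear p -> forall e : R, (0 < e)%R ->
  \forall n \near \oo, forall s, unit_cube s -> (Qsup p n s <= e)%R.
Proof.
move=> nonlin e e0; have [N _ close] := F1_ext_prob_sub_near e0.
exists N.+1 => // -[|n] //= Nn s s01.
apply: ge_sup; first by exists (Qn p n.+1 s 0%N), 0%N.
move=> _ [i _ <-]; apply: le_trans (close n Nn i).
rewrite F1_ext_prob ext_prob1 // /Qn lerD2l lerN2.
by apply: (le_Fn p_law) => // [|j]; [exact: unit_cube0|case/andP: (s01 j)].
Qed.

End Extinction.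

Section Eps1.
Variables (R : realType) (p : nat -> seq nat -> R).
Hypothesis p_law : is_offspring_law p.
Local Open Scope ereal_scope.

Lemma one_sub_prod_tail_le (x : nat -> R) (z : seq nat) j (Q : R) : unit_cube x ->
  (forall l, 1 - x l <= Q)%R ->
  (1 - \prod_(l < size z | (j < l)%N) x l ^+ nth 0%N z l <= Q * (sumn z)%:R)%R.
Proof.
move=> x01 xQ; pose b l := if (j < l)%N then x l else 1%R.
have Q0 : (0 <= Q)%R by apply: le_trans (xQ 0%N); rewrite subr_ge0; case/andP: (x01 0%N).
have -> : (\prod_(l < size z | (j < l)%N) x l ^+ nth 0%N z l =
           \prod_(l < size z) b l ^+ nth 0%N z l)%R.
  by rewrite big_mkcond; apply: eq_bigr => l _; rewrite /b; case: ifP; rewrite ?expr1n.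
apply: (le_trans (@one_sub_prod_expr_le _ (size z) (nth 0%N z) b _)).
  by move=> l; rewrite /b; case: ifP => _; rewrite ?ler01 ?lexx ?x01.
rewrite sumn_nth natr_sum mulr_sumr; apply: ler_sum => l _.
by rewrite mulrC ler_wpM2r // /b; case: ifP; rewrite ?subrr.
Qed.

Lemma Nbar_integrand_le (x : nat -> R) (z : seq nat) j (Q : R) : unit_cube x ->
  (forall l, 1 - x l <= Q)%R ->
  (0 <= (\sum_(k < nth 0%N z j) x j ^+ k) *
        (1 - \prod_(l < size z | (j < l)%N) x l ^+ nth 0%N z l) <=
   (nth 0%N z j)%:R * Num.min 1 (Q * (sumn z)%:R))%R.
Proof.
move=> x01 xQ; have [xj0 xj1] := andP (x01 j).
have geom0 : (0 <= \sum_(k < nth 0%N z j) x j ^+ k)%R.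
  by apply: sumr_ge0 => k _; rewrite exprn_ge0.
have geom_le : (\sum_(k < nth 0%N z j) x j ^+ k <= (nth 0%N z j)%:R)%R.
  apply: le_trans (_ : \sum_(k < nth 0%N z j) 1 <= _)%R.
    by apply: ler_sum => k _; rewrite exprn_ile1.
  by rewrite sumr_const card_ord.
have /andP[P0 P1] : (0 <= \prod_(l < size z | (j < l)%N) x l ^+ nth 0%N z l <= 1)%R.
  by rewrite prodr_ge0 ?prodr_ile1 // => l _; have [xl0 xl1] := andP (x01 l);
     rewrite exprn_ge0 ?exprn_ile1.
rewrite mulr_ge0 ?subr_ge0 //= ler_pM ?subr_ge0 // le_min.
by rewrite lerBlDr lerDl P0 one_sub_prod_tail_le.
Qed.

Section Qsup.
Variables (n : nat) (s : nat -> R).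
Hypothesis s01 : unit_cube s.

Lemma Qn_ge0 j : (0 <= Qn p n s j)%R.
Proof. by rewrite /Qn subr_ge0; case/andP: (Fn_cube p_law n s01 j). Qed.

Lemma Qn_le_Qsup j : (Qn p n s j <= Qsup p n s)%R.
Proof.
apply: sup_upper_bound; last by exists j.
split; first by exists (Qn p n s 0%N), 0%N.
by exists 1%R => _ [k _ <-]; rewrite /Qn lerBlDr lerDl; case/andP: (Fn_cube p_law n s01 k).
Qed.

Lemma Qsup_ge0 : (0 <= Qsup p n s)%R.
Proof. exact: le_trans (Qn_ge0 0%N) (Qn_le_Qsup 0%N). Qed.

Lemma esum_Qn_Nbar_le i :
  \esum_(j in [set: nat]) (Qn p n s j)%:E * Nbar p i j (Fn p n s) <=
  (Qsup p n s)%:E *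
    Ex p i (fun z => (sumn z)%:R * Num.min 1 (Qsup p n s * (sumn z)%:R))%R.
Proof.
set Q := Qsup p n s; set m := fun z : seq nat => (Num.min 1 (Q * (sumn z)%:R))%R.
have m0 z : (0 <= m z)%R by rewrite /m le_min ler01 mulr_ge0 ?Qsup_ge0.
have integrand := Nbar_integrand_le _ _ (Fn_cube p_law n s01) Qn_le_Qsup.
have Nbar_le j : Nbar p i j (Fn p n s) <= Ex p i (fun z => (nth 0%N z j)%:R * m z)%R.
  by apply: le_Ex => // z; case/andP: (integrand z j).
apply: le_trans (_ : \esum_(j in [set: nat])
  Q%:E * Ex p i (fun z => (nth 0%N z j)%:R * m z)%R <= _).
  apply: le_esum => j _; apply: lee_pmul; rewrite ?lee_fin ?Qn_ge0 ?Qn_le_Qsup //.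
  by apply: Ex_ge0 => // z; case/andP: (integrand z j).
rewrite esumZl ?Qsup_ge0 // => [|j _]; last by apply: Ex_ge0 => // z; rewrite mulr_ge0.
rewrite -(@Ex_sum_esum _ _ p_law i (fun z j => (nth 0%N z j)%:R * m z)%R) => [|z j|z j zj].
- apply: lee_wpmul2l; first by rewrite lee_fin Qsup_ge0.
  by apply: le_Ex => // z; rewrite -mulr_suml -natr_sum -sumn_nth.
- by rewrite mulr_ge0.
- by rewrite nth_default // mul0r.
Qed.

End Qsup.

(* Split [Z_i] at [K]: above [K] use [min <= 1] and the tail bound, below it
   use [min <= Q Z_i <= Q K]. *)
Lemma Ex_size_min_le i (Q e : R) (K : nat) : (0 <= Q)%R -> (0 <= e)%R ->
  Ex p i (fun z => (sumn z)%:R * (K < sumn z)%N%:R)%R <= e%:E * Mi p i ->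
  Ex p i (fun z => (sumn z)%:R * Num.min 1 (Q * (sumn z)%:R))%R <=
  (e + K%:R * Q)%:E * Mi p i.
Proof.
move=> Q0 e0 tailK.
apply: le_trans (_ : Ex p i (fun z => (sumn z)%:R * (K < sumn z)%N%:R +
                                    K%:R * Q * (sumn z)%:R)%R <= _).
  apply: le_Ex => // z; case: (ltnP K (sumn z)) => Kz /=.
    by rewrite mulr1 -[leLHS]addr0 lerD ?mulr_ge0 // ler_piMr // ge_min lexx.
  rewrite mulr0 add0r mulrC ler_wpM2r // ge_min; apply/orP; right.
  by rewrite [(_ * Q)%R]mulrC ler_wpM2l ?ler_nat.
rewrite ExD // => [|z]; last by rewrite !mulr_ge0.
rewrite ExZl ?mulr_ge0 // EFinD ge0_muleDl ?lee_fin ?mulr_ge0 //.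
by rewrite leeD // lee_wpmul2l ?lee_fin ?mulr_ge0.
Qed.

(* [eps1] divides by [fine (Mi p i)], so it is [0] when [M_i] is [0] or [+oo]. *)
Lemma eps1_bound n s i (K : nat) (e : R) : unit_cube s -> (0 <= e)%R ->
  Ex p i (fun z => (sumn z)%:R * (K < sumn z)%N%:R)%R <= e%:E * Mi p i ->
  (0 <= eps1 p n s i <= Qsup p n s * (e + K%:R * Qsup p n s))%R.
Proof.
move=> s01 e0 tailK; set Q := Qsup p n s.
have Q0 : (0 <= Q)%R by exact: (Qsup_ge0 n s01).
rewrite /eps1; set S := \esum_(j in [set: nat]) _.
have S0 : 0 <= S.
  apply: esum_ge0 => j _; rewrite mule_ge0 ?lee_fin ?(Qn_ge0 n s01) // Ex_ge0 // => z.
  by case/andP: (Nbar_integrand_le z j (Fn_cube p_law n s01) (Qn_le_Qsup n s01)).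
have S_le : S <= (Q * (e + K%:R * Q))%:E * Mi p i.
  rewrite EFinM -muleA; apply: le_trans (esum_Qn_Nbar_le n s01 i) _.
  by rewrite lee_wpmul2l ?lee_fin // Ex_size_min_le.
have bound0 : (0 <= Q * (e + K%:R * Q))%R by rewrite mulr_ge0 ?addr_ge0 ?mulr_ge0.
have Mi0 : 0 <= Mi p i by apply: Ex_ge0 => // z; rewrite ler0n.
move: S_le Mi0; case: (Mi p i) => [m||] //= S_le; last first.
  by move=> _; rewrite invr0 mulr0 lexx.
rewrite lee_fin le_eqVlt => /predU1P[<-|m0]; first by rewrite invr0 mulr0 lexx.
have S_fin : S \is a fin_num by rewrite ge0_fin_numE // (le_lt_trans S_le) ?ltry.
rewrite -(fineK S_fin) -EFinM lee_fin in S_le.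
by rewrite divr_ge0 ?fine_ge0 ?(ltW m0) //= ler_pdivrMr.
Qed.

End Eps1.

Lemma eps1_ratio_le (R : realType) (p : nat -> seq nat -> R) (n : nat) s i (K : nat) (e : R) :
  is_offspring_law p -> unit_cube s -> 0 <= e ->
  (Ex p i (fun z => (sumn z)%:R * (K < sumn z)%N%:R)%R <= e%:E * Mi p i)%E ->
  `|eps1 p n s i| / Qsup p n s <= e + K%:R * Qsup p n s.
Proof.
move=> p_law s01 e0 tailK; have [eps0 eps_le] := andP (eps1_bound p_law n s01 e0 tailK).
have := Qsup_ge0 p_law n s01; rewrite le_eqVlt => /predU1P[<-|Q0].
  by rewrite invr0 mulr0 mulr0 addr0.
by rewrite ger0_norm // ler_pdivrMr // mulrC.
Qed.

Lemma Sset0 (R : realType) : Sset (fun _ => 0 : R).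
Proof. by split; [exact: unit_cube0|move/(congr1 (@^~ 0%N))/eqP; rewrite eq_sym oner_eq0]. Qed.

Lemma Mbar_le_scaled (R : realType) (p : nat -> seq nat -> R) (v u : nat -> R) (C U : R) :
  0 < C -> (forall j, 0 < v j) -> (forall i, 0 < u i) -> (forall i, u i <= U) ->
  (forall i j, (Mbar p i j < (C * u i * v j)%:E)%E) ->
  0 <= C * U /\ forall i j, (Mbar p i j <= (C * U * v j)%:E)%E.
Proof.
move=> C0 v0 u0 u_le M_lt; split.
  by rewrite mulr_ge0 ?(ltW C0) // (le_trans (ltW (u0 0%N)) (u_le 0%N)).
move=> i j; rewrite (le_trans (ltW (M_lt i j))) // lee_fin.
by rewrite ler_wpM2r ?ler_wpM2l ?(ltW C0) ?(ltW (v0 j)).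
Qed.

Theorem lemma6 (R : realType) (p : nat -> seq nat -> R) (v u : nat -> R) :
  is_offspring_law p ->
  in_M10 p v u ->
  F_not_linear p ->
  (fun n => ereal_sup
      [set ((`|eps1 p n x.1 x.2| / Qsup p n x.1)%:E)
         | x in [set x : (nat -> R) * nat | Sset x.1]]) @ \oo --> 0%E.
Proof.
move=> p_law [[irr [_ [_ [_ [_ [v_gt0 [u_gt0 [v_eigen [_ [_ [v_sum1 [[U u_le] [_ tail]]]]]]]]]]]]]
  [_ [_ [C [_ [C_gt0 [M_lt _]]]]]]] nonlin.
have [B_ge0 M_le] := Mbar_le_scaled C_gt0 v_gt0 u_gt0 u_le M_lt.
apply: ereal_cvg0_near => e e0; have e20 : 0 < e / 2 by rewrite divr_gt0.
have [K _ /(_ K (leqnn K)) tailK] := tail _ e20.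
have eK0 : 0 < e / 2 / (K%:R + 1) by rewrite divr_gt0 // ltr_wpDl.
near=> n.
have Q_le : forall s, unit_cube s -> Qsup p n s <= e / 2 / (K%:R + 1).
  by near: n; exact: (Qsup_near0 p_law v_gt0 v_sum1 B_ge0 M_le v_eigen irr nonlin eK0).
apply/andP; split.
  apply: le_trans (ereal_sup_ubound _); last by exists (fun _ => 0, 0%N) => //; exact: Sset0.
  by rewrite lee_fin divr_ge0 // (Qsup_ge0 p_law n (unit_cube0 R)).
apply: ge_ereal_sup => _ [[s i] [s01 _] <-]; rewrite lee_fin /=.
apply: le_trans (eps1_ratio_le n p_law s01 (ltW e20) (tailK i)) _.
by rewrite [leRHS](splitr e) lerD2l natr_mulr_le ?(ltW e20) ?Q_le.
Unshelve. all: by end_near.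
Qed.
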